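(* Let $U$ be an $N\times N$ unitary matrix with no zero entries, let $S,T$ be $N\times N$ enphased permutation matrices, let $V=SUT^{-1}$, and let $\Pi_S,\Pi_T$ be the permutation matrices with $S=D_S\Pi_S$, $T=D_T\Pi_T$ for unitary diagonal $D_S,D_T$. Then $\mathbf D(U)=\mathbf D(V)$, i.e. the multiplicities of the eigenvalue $1$ in the spectra of $\mathcal I_U$ and $\mathcal I_V$ are equal. Moreover $\mathbb V_V(1)=\Phi_{\Pi_S,\Pi_T}(\mathbb V_U(1))$, $\mathrm{Im}\,\mathbb V_V(1)=\Phi_{\Pi_S,\Pi_T}(\mathrm{Im}\,\mathbb V_U(1))$, and $\mathcal F_V=\Phi_{S,T}(\mathcal F_U)$.
   Context: An enphased permutation matrix is a product of a permutation matrix and a unitary diagonal matrix (factorization $D\Pi$ is unique). $\circ$ is the entrywise product. For unitary $W$ with no zero entries: $\mathcal C_W(F)=(F\circ W)W^*$, $\mathcal D_W(F)=W(\overline F\circ W)^*$, $\mathcal I_W=\mathcal C_W^{-1}\mathcal D_W$ (operators on $\mathbb C^{N\times N}$); $\mathbb V_W(\lambda)$ is the complex eigenspace of $\mathcal I_W$ for eigenvalue $\lambda$, and $\mathrm{Im}\,\mathbb V_W(\lambda)$ is the real space of purely imaginary matrices in $\mathbb V_W(\lambda)$. The feasible space is $\mathcal F_W=\{iR\circ W:\ R \text{ real } N\times N,\ (iR\circ W)W^* \text{ antihermitian}\}$ (equivalently, the intersection of the tangent spaces at $W$ to the unitary group and to the manifold of matrices whose entries have the same moduli as those of $W$), and the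 undephased defect is $\mathbf D(W)=\dim_{\mathbb R}\mathcal F_W$. $\Phi_{A,B}$ denotes the operator $X\mapsto AXB^{-1}$. *)

(* Complex numbers are modelled as C := R[i] = complex R
   for an arbitrary real closed field R (mathcomp-real-closed); this
   includes the genuine complex numbers (R = the reals). *)
From HB Require Import structures.
From mathcomp Require Import all_boot all_order all_algebra all_fingroup.
From mathcomp Require Import complex.

Set Implicit Arguments.
Unset Strict Implicit.
Unset Printing Implicit Defensive.

Import Order.TTheory GRing.Theory Num.Theory.
Local Open Scope ring_scope.

Section Defs.
Variable R : rcfType.
Local Notation C := (complex R).
Variable N : nat.
Local Notation M := 'M[C]_N.

Definition adjmx (W : M) : M := (map_mx Num.conj W)^T.

Definition hadamard (A B : M) : M := \matrix_(i, j) (A i j * B i j).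

Definition unitary (W : M) : Prop :=
  adjmx W *m W = 1%:M /\ W *m adjmx W = 1%:M.

Definition no_zero_entries (W : M) : Prop := forall i j, W i j != 0.

(* unitary diagonal matrix diag(d), d of unit-modulus entries *)
Definition unit_moduli (d : 'rV[C]_N) : Prop := forall j, `|d 0 j| = 1.

Definition enphased (d : 'rV[C]_N) (s : 'S_N) : M := diag_mx d *m perm_mx s.

Definition Cop (W : M) (F : M) : M := hadamard F W *m adjmx W.
Definition Dop (W : M) (F : M) : M :=
  W *m adjmx (hadamard (map_mx Num.conj F) W).
(* C_W^{-1}: since C_W(F) W = F o W for unitary W, the inverse of C_W
   (for unitary W with no zero entries) is G |-> (G W) o (1/W) entrywise. *)
Definition Cinv (W : M) (G : M) : M := \matrix_(i, j) ((G *m W) i j / W i j).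
Definition Iop (W : M) (F : M) : M := Cinv W (Dop W F).

Definition eigsp (W : M) (lam : C) : pred M :=
  fun F => Iop W F == lam *: F.

Definition purely_imag (F : M) : Prop := forall i j, complex.Re (F i j) = 0.

Definition Im_eigsp (W : M) (lam : C) (F : M) : Prop :=
  eigsp W lam F /\ purely_imag F.

Definition antihermitian (X : M) : Prop := adjmx X = - X.

Definition cmx (Rm : 'M[R]_N) : M := map_mx (fun r : R => (r%:C)%C) Rm.

Definition feasible (W : M) (X : M) : Prop :=
  exists Rm : 'M[R]_N,
    X = hadamard ('i%C *: cmx Rm) W /\ antihermitian (X *m adjmx W).

Definition realify (F : M) : 'rV[R]_(N * N + N * N) :=
  row_mx (mxvec (map_mx (@complex.Re R) F)) (mxvec (map_mx (@complex.Im R) F)).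

(* P (a real-linear subspace of 'M[C]_N) has real dimension k:
   the image of P under realify is the row space of a k-row matrix
   of full row rank. *)
Definition real_dim (P : M -> Prop) (k : nat) : Prop :=
  exists B : 'M[R]_(k, N * N + N * N),
    row_free B /\
    forall v : 'rV[R]_(N * N + N * N),
      (v <= B)%MS <-> exists2 F, P F & v = realify F.

Definition Phi (A B : M) (X : M) : M := A *m X *m invmx B.

Definition img (f : M -> M) (P : M -> Prop) (X : M) : Prop :=
  exists2 Y, P Y & X = f Y.

(* algebraic multiplicity of lam in the spectrum of I_W (I_W represented by
   its matrix lin_mx acting on 'M[C]_N ~ C^(N*N)) *)
Definition mult_I (W : M) (lam : C) : nat :=
  mup lam (char_poly (lin_mx (Iop W))).

End Defs.

From HB Require Import structures.
From mathcomp Require Import all_boot all_order all_algebra all_fingroup.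
From mathcomp Require Import complex ring.
Import Order.TTheory GRing.Theory Num.Theory.
Local Open Scope ring_scope.
Set Implicit Arguments.
Unset Strict Implicit.
Unset Printing Implicit Defensive.

(* Writing S = D_S Pi_S and T = D_T Pi_T, the map X |-> S X T^-1 acts entrywise
   as X |-> (a_i X_(s i, t j) b_j) with phases a, b of modulus one.  Such
   monomial transforms compose, commute with adjoints up to conjugating the
   phases, and are multiplicative on Hadamard products.  In I_V the phases of
   V enter C_V and D_V in the same way and cancel, so I_V is I_U conjugated by
   the pure permutation X |-> Pi_S X Pi_T^-1; this transports the eigenspaces,
   and since that permutation only permutes the coordinates of C^(N*N), the
   characteristic polynomials of I_U and I_V agree.  The phases do survive in
   the feasible space, which is therefore transported by X |-> S X T^-1 itself,
   a real-linear bijection, hence preserving real dimension. *)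

Lemma char_poly_perm (F : comNzRingType) n (A : 'M[F]_n) (p : 'S_n) :
  char_poly (row_perm p (col_perm p A)) = char_poly A.
Proof.
rewrite /char_poly; have -> : char_poly_mx (row_perm p (col_perm p A)) =
          row_perm p (col_perm p (char_poly_mx A)).
  by apply/matrixP=> i j; rewrite !mxE (inj_eq perm_inj).
rewrite row_permE col_permE !det_mulmx !det_perm odd_permV mulrCA mulrA.
by rewrite -mulrA -signr_addb addbb expr0 mulr1.
Qed.

Lemma lin_mx_delta (F : pzSemiRingType) m n (f : 'M[F]_(m, n) -> 'M[F]_(m, n)) i j k l :
  lin_mx f (mxvec_index i j) (mxvec_index k l) = f (delta_mx i j) k l.
Proof. by rewrite mxE /= vec_mx_delta mxvecE. Qed.

Lemma mul_rV_lin1_fun (F : pzRingType) m n (h : 'rV[F]_m -> 'rV[F]_n) :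
  {morph h : u v / u + v} -> (forall c u, h (c *: u) = c *: h u) ->
  forall u, u *m lin1_mx h = h u.
Proof.
move=> hD hZ u; have h0 : h 0 = 0 by rewrite -(scale0r 0) hZ scale0r.
rewrite [in RHS](row_sum_delta u) (big_morph h hD h0); apply/rowP=> i.
by rewrite mxE summxE; apply: eq_bigr => j _; rewrite hZ !mxE.
Qed.

Section VecPerm.
Variable N : nat.

Definition vec_perm_fun (s t : 'S_N) (p : 'I_(N * N)) : 'I_(N * N) :=
  let ij := enum_val (cast_ord (esym (mxvec_cast N N)) p) in
  mxvec_index (s ij.1) (t ij.2).

Lemma vec_perm_funE s t i j :
  vec_perm_fun s t (mxvec_index i j) = mxvec_index (s i) (t j).
Proof. by rewrite /vec_perm_fun /mxvec_index cast_ordK enum_rankK. Qed.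

Lemma vec_perm_fun_inj s t : injective (vec_perm_fun s t).
Proof.
move=> p q; case/mxvec_indexP: p => i j; case/mxvec_indexP: q => k l.
rewrite !vec_perm_funE /mxvec_index => /cast_ord_inj /enum_rank_inj [].
by move=> /perm_inj -> /perm_inj ->.
Qed.

Definition vec_perm s t : 'S_(N * N) := perm (@vec_perm_fun_inj s t).

End VecPerm.

Section RealDim.
Variables (R : rcfType) (N : nat).
Local Notation M := 'M[complex R]_N.

Lemma eq_img (f g : M -> M) P X : f =1 g -> img f P X <-> img g P X.
Proof. by move=> fg; split=> -[Y PY ->]; exists Y; rewrite ?fg. Qed.

Definition unrealify (v : 'rV[R]_(N * N + N * N)) : M :=
  \matrix_(i, j) (vec_mx (lsubmx v) i j +i* vec_mx (rsubmx v) i j)%C.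

Lemma realifyK : cancel (@realify R N) unrealify.
Proof.
move=> X; apply/matrixP=> i j.
by rewrite /unrealify /realify mxE row_mxKl row_mxKr !mxvecK !mxE; case: (X i j).
Qed.

Lemma unrealifyK : cancel unrealify (@realify R N).
Proof.
move=> v; rewrite /realify.
have -> : map_mx (@complex.Re R) (unrealify v) = vec_mx (lsubmx v).
  by apply/matrixP=> i j; rewrite !mxE.
have -> : map_mx (@complex.Im R) (unrealify v) = vec_mx (rsubmx v).
  by apply/matrixP=> i j; rewrite !mxE.
by rewrite !vec_mxK hsubmxK.
Qed.

Lemma realifyD : {morph @realify R N : X Y / X + Y}.
Proof.
move=> X Y; rewrite /realify add_row_mx -!linearD /=.
by congr (row_mx (mxvec _) (mxvec _)); apply/matrixP=> i j;
  rewrite !mxE; case: (X i j); case: (Y i j).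
Qed.

Lemma realifyZ (r : R) (X : M) : realify ((r%:C)%C *: X) = r *: realify X.
Proof.
rewrite /realify scale_row_mx -!linearZ /=.
by congr (row_mx (mxvec _) (mxvec _)); apply/matrixP=> i j;
  rewrite !mxE; case: (X i j) => x y /=; ring.
Qed.

Definition real_linear (f : M -> M) :=
  {morph f : X Y / X + Y} /\ forall (r : R) X, f ((r%:C)%C *: X) = (r%:C)%C *: f X.

Lemma real_linear_can f g : real_linear f -> cancel f g -> cancel g f -> real_linear g.
Proof.
by move=> [fD fZ] fK gK; split=> [X Y | r X]; apply: (can_inj fK); rewrite ?fD ?fZ !gK.
Qed.

Definition real_mx (f : M -> M) := lin1_mx (@realify R N \o f \o unrealify).

Lemma mul_real_mx f X : real_linear f -> realify X *m real_mx f = realify (f X).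
Proof.
move=> [fD fZ]; rewrite mul_rV_lin1_fun => [|u v|c u]; rewrite /= ?realifyK //.
  by rewrite -[u]unrealifyK -[v]unrealifyK -realifyD !realifyK fD realifyD.
by rewrite -[u]unrealifyK -realifyZ !realifyK fZ realifyZ.
Qed.

Lemma real_mx_can f g :
  real_linear f -> real_linear g -> cancel f g -> real_mx f *m real_mx g = 1%:M.
Proof.
move=> linf ling fK; apply/row_matrixP=> i.
by rewrite row_mul rowE -[delta_mx 0 i]unrealifyK !mul_real_mx // fK unrealifyK row1.
Qed.

Lemma real_dim_img f g P k :
  real_linear f -> cancel f g -> cancel g f -> real_dim P k -> real_dim (img f P) k.
Proof.
move=> linf fK gK [B [freeB spanB]]; have ling := real_linear_can linf fK gK.
exists (B *m real_mx f); split.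
  apply/row_freeP; have [B' B'B] := row_freeP freeB; exists (real_mx g *m B').
  by rewrite -mulmxA (mulmxA (real_mx f)) real_mx_can // mul1mx.
move=> v; split=> [/submxP [D ->] | [_ [Y PY ->] ->]].
  have /spanB [Y PY DB] : (D *m B <= B)%MS by exact: submxMl.
  by rewrite mulmxA DB mul_real_mx //; exists (f Y) => //; exists Y.
have /spanB /submxP [D DB] : exists2 F, P F & realify Y = realify F by exists Y.
by apply/submxP; exists D; rewrite mulmxA -DB mul_real_mx.
Qed.

Lemma real_dim_ext (P Q : M -> Prop) k :
  (forall X, P X <-> Q X) -> real_dim P k <-> real_dim Q k.
Proof.
move=> PQ; split=> -[B [freeB spanB]]; exists B; split => // v; rewrite spanB.
  by split=> -[F /PQ PF ->]; exists F.
by split=> -[F /PQ PF ->]; exists F.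
Qed.

Lemma real_dim_imgE f (P : M -> Prop) k :
  real_linear f -> bijective f -> real_dim (img f P) k <-> real_dim P k.
Proof.
move=> linf [g fK gK]; split; last exact: real_dim_img.
have gfP X : img g (img f P) X <-> P X.
  split=> [[_ [Y PY ->] ->] | PX]; first by rewrite fK.
  by exists (f X); [exists X | rewrite fK].
by move=> /(real_dim_img (real_linear_can linf fK gK) gK fK) /(real_dim_ext _ gfP).
Qed.

End RealDim.

Section MonomialTransform.
Variables (R : rcfType) (N : nat).
Local Notation C := (complex R).
Local Notation M := 'M[C]_N.

Definition monomial (a b : 'I_N -> C) (s t : 'I_N -> 'I_N) (X : M) : M :=
  \matrix_(i, j) (a i * X (s i) (t j) * b j).

Local Notation permute s t := (monomial (fun _ => 1) (fun _ => 1) s t).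
Local Notation idp := (1%g : 'S_N).

Definition unit_phases (a : 'I_N -> C) := forall i, a i * (a i)^* = 1.

Lemma unit_phasesJ a : unit_phases a -> unit_phases (fun i => (a i)^*).
Proof. by move=> ua i; rewrite conjCK mulrC. Qed.

Lemma unit_phases1 : unit_phases (fun _ => 1).
Proof. by move=> i; rewrite conjC1 mulr1. Qed.

Lemma unit_phases_neq0 a i : unit_phases a -> a i != 0.
Proof.
by move=> /(_ i); apply: contra_eqN => /eqP->; rewrite mul0r eq_sym oner_eq0.
Qed.

Lemma eq_monomial a b a' b' s t s' t' X :
  a =1 a' -> b =1 b' -> s =1 s' -> t =1 t' ->
  monomial a b s t X = monomial a' b' s' t' X.
Proof. by move=> ha hb hs ht; apply/matrixP=> i j; rewrite !mxE ha hb hs ht. Qed.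

Lemma monomial_id X : permute id id X = X.
Proof. by apply/matrixP=> i j; rewrite !mxE mul1r mulr1. Qed.

Lemma monomial_comp a b a' b' s t s' t' X :
  monomial a b s t (monomial a' b' s' t' X) =
  monomial (fun i => a i * a' (s i)) (fun j => b' (t j) * b j) (s' \o s) (t' \o t) X.
Proof. by apply/matrixP=> i j; rewrite !mxE /= !mulrA. Qed.

Lemma monomialD a b s t X Y :
  monomial a b s t (X + Y) = monomial a b s t X + monomial a b s t Y.
Proof. by apply/matrixP=> i j; rewrite !mxE; ring. Qed.

Lemma monomialZ a b s t c X :
  monomial a b s t (c *: X) = c *: monomial a b s t X.
Proof. by apply/matrixP=> i j; rewrite !mxE; ring. Qed.

Lemma monomialN a b s t X : monomial a b s t (- X) = - monomial a b s t X.
Proof. by apply/matrixP=> i j; rewrite !mxE mulrN mulNr. Qed.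

Lemma mul_monomial a b c c' s t (r : 'S_N) X Y :
  (forall k, c k * c' k = 1) ->
  monomial a c s r X *m monomial c' b r t Y = monomial a b s t (X *m Y).
Proof.
move=> cc'; apply/matrixP=> i j; rewrite !mxE big_distrr big_distrl /=.
rewrite [RHS](reindex_inj (@perm_inj _ r)); apply: eq_bigr => k _.
by rewrite !mxE -[RHS]mul1r -(cc' k); ring.
Qed.

Lemma adjmx_monomial a b s t X :
  adjmx (monomial a b s t X) =
  monomial (fun i => (b i)^*) (fun j => (a j)^*) t s (adjmx X).
Proof. by apply/matrixP=> i j; rewrite !mxE !rmorphM /=; ring. Qed.

Lemma conj_monomial a b s t X :
  map_mx Num.conj (monomial a b s t X) =
  monomial (fun i => (a i)^*) (fun j => (b j)^*) s t (map_mx Num.conj X).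
Proof. by apply/matrixP=> i j; rewrite !mxE !rmorphM. Qed.

Lemma hadamard_monomial a b a' b' s t X Y :
  hadamard (monomial a b s t X) (monomial a' b' s t Y) =
  monomial (fun i => a i * a' i) (fun j => b j * b' j) s t (hadamard X Y).
Proof. by apply/matrixP=> i j; rewrite !mxE; ring. Qed.

Lemma monomial_scalar1 a b (s : 'S_N) :
  (forall i, a i * b i = 1) -> monomial a b s s 1%:M = 1%:M.
Proof.
move=> ab; apply/matrixP=> i j; rewrite !mxE (inj_eq (@perm_inj _ s)).
by case: eqP => [->|_]; rewrite ?mulr1 ?ab // mulr0 mul0r.
Qed.

Definition monomial_inv a b (s t : 'S_N) : M -> M :=
  monomial (fun i => (a ((s^-1)%g i))^*) (fun j => (b ((t^-1)%g j))^*)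
    (s^-1)%g (t^-1)%g.

Lemma monomialK a b (s t : 'S_N) :
  unit_phases a -> unit_phases b -> cancel (monomial a b s t) (monomial_inv a b s t).
Proof.
move=> ua ub X; rewrite /monomial_inv monomial_comp -[RHS]monomial_id.
by apply: eq_monomial => i /=; rewrite ?permKV // ?ub // mulrC ua.
Qed.

Lemma monomialKV a b (s t : 'S_N) :
  unit_phases a -> unit_phases b -> cancel (monomial_inv a b s t) (monomial a b s t).
Proof.
move=> ua ub X; rewrite /monomial_inv monomial_comp -[RHS]monomial_id.
by apply: eq_monomial => i /=; rewrite ?permK // ?ua // mulrC ub.
Qed.

Lemma Iop_monomial a b (s t : 'S_N) U Y :
  unit_phases a -> unit_phases b ->
  Iop (monomial a b s t U) (permute s t Y) = permute s t (Iop U Y).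
Proof.
move=> ua ub; rewrite /Iop /Dop /Cinv conj_monomial hadamard_monomial.
rewrite adjmx_monomial mul_monomial; last by move=> k; rewrite conjC1 mul1r ub.
rewrite mul_monomial; last by move=> k; rewrite conjC1 mul1r mulrC ua.
apply/matrixP=> i j; rewrite !mxE mul1r mulr1 !invfM.
move: (U (s i) (t j))^-1 => z.
have ai := unit_phases_neq0 i ua; have bj := unit_phases_neq0 j ub.
by rewrite -[RHS]mul1r -(mulfV ai) -[RHS]mul1r -(mulfV bj); ring.
Qed.

Lemma feasible_monomial a b (s t : 'S_N) W Y :
  unit_phases a -> unit_phases b ->
  feasible W Y -> feasible (monomial a b s t W) (monomial a b s t Y).
Proof.
move=> ua ub [Rm [-> antiherm]].
exists (\matrix_(i, j) Rm (s i) (t j)); split.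
  by apply/matrixP=> i j; rewrite !mxE; ring.
rewrite /antihermitian adjmx_monomial mul_monomial; last by move=> k; rewrite ub.
rewrite adjmx_monomial antiherm monomialN; congr (- _).
by apply: eq_monomial => // i; apply: conjCK.
Qed.

Lemma feasible_monomialE a b (s t : 'S_N) U X :
  unit_phases a -> unit_phases b ->
  feasible (monomial a b s t U) X <-> img (monomial a b s t) (feasible U) X.
Proof.
move=> ua ub; split => [fX|[Y fY ->]]; last exact: feasible_monomial.
exists (monomial_inv a b s t X); last by rewrite monomialKV.
rewrite -[U](monomialK s t ua ub).
by apply: feasible_monomial => //; apply: unit_phasesJ.
Qed.

Lemma bij_monomial a b (s t : 'S_N) :
  unit_phases a -> unit_phases b -> bijective (monomial a b s t).
Proof.
by move=> ua ub; exists (monomial_inv a b s t); [apply: monomialK | apply: monomialKV].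
Qed.

Lemma eigsp_monomialE a b (s t : 'S_N) U lam X :
  unit_phases a -> unit_phases b ->
  eigsp (monomial a b s t U) lam X <-> img (permute s t) (eigsp U lam) X.
Proof.
have permK := monomialK s t unit_phases1 unit_phases1.
have permKV := monomialKV s t unit_phases1 unit_phases1.
move=> ua ub; rewrite /eigsp; split => [/eqP eigX | [Y /eqP eigY ->]].
  exists (monomial_inv (fun _ => 1) (fun _ => 1) s t X); last by rewrite permKV.
  apply/eqP; apply: (can_inj permK).
  by rewrite monomialZ -(Iop_monomial _ _ _ _ ua ub) !permKV.
by apply/eqP; rewrite Iop_monomial // eigY monomialZ.
Qed.

Lemma enphased_monomial (d : 'rV[C]_N) (p : 'S_N) :
  enphased d p = monomial (fun i => d 0 i) (fun _ => 1) p idp 1%:M.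
Proof. by apply/matrixP=> i j; rewrite /enphased mul_diag_mx !mxE perm1 mulr1. Qed.

Lemma perm_mx_monomial (p : 'S_N) : perm_mx p = permute p idp 1%:M :> M.
Proof. by apply/matrixP=> i j; rewrite !mxE perm1 mulr1 mul1r. Qed.

Lemma adjmx1 : adjmx (1%:M : M) = 1%:M.
Proof.
by apply/matrixP=> i j; rewrite !mxE eq_sym; case: eqP; rewrite ?conjC1 ?conjC0.
Qed.

(* A monomial matrix with unit phases is unitary, so its inverse is its adjoint. *)
Lemma invmx_monomial d (q : 'S_N) :
  unit_phases d ->
  invmx (monomial d (fun _ => 1) q idp 1%:M) =
  monomial (fun _ => 1) (fun i => (d i)^*) idp q 1%:M.
Proof.
move=> ud; set T := monomial _ _ _ _ _.
have -> : monomial (fun _ => 1) (fun i => (d i)^*) idp q 1%:M = adjmx T.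
  by rewrite adjmx_monomial adjmx1; apply: eq_monomial => // i; rewrite conjC1.
have TadjT : T *m adjmx T = 1%:M.
  rewrite adjmx_monomial mul_monomial; last by move=> k; rewrite conjC1 mulr1.
  by rewrite adjmx1 mulmx1 monomial_scalar1.
have [Tu _] := mulmx1_unit TadjT.
by rewrite -[RHS](mulKmx Tu) TadjT mulmx1.
Qed.

Lemma Phi_monomial a d (p q : 'S_N) Y :
  unit_phases d ->
  Phi (monomial a (fun _ => 1) p idp 1%:M) (monomial d (fun _ => 1) q idp 1%:M) Y
  = monomial a (fun i => (d i)^*) p q Y.
Proof.
move=> ud; rewrite /Phi invmx_monomial //.
have permute1 : permute idp idp Y = Y.
  by rewrite -[RHS]monomial_id; apply: eq_monomial => // i; rewrite perm1.
rewrite -{1}permute1 !mul_monomial ?mul1mx ?mulmx1 //; move=> k; exact: mulr1.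
Qed.

Lemma purely_imag_permute (s t : 'S_N) Y :
  purely_imag (permute s t Y) <-> purely_imag Y.
Proof.
split=> imY i j; last by rewrite mxE mul1r mulr1.
by have := imY (s^-1 i)%g (t^-1 j)%g; rewrite mxE !permKV mul1r mulr1.
Qed.

Lemma Im_eigsp_monomialE a b (s t : 'S_N) U lam X :
  unit_phases a -> unit_phases b ->
  Im_eigsp (monomial a b s t U) lam X <-> img (permute s t) (Im_eigsp U lam) X.
Proof.
move=> ua ub; have eigE := eigsp_monomialE s t U lam _ ua ub.
split=> [[/eigE [Y eigY ->] /purely_imag_permute imY] | [Y [eigY imY] ->]].
  by exists Y.
by split; [apply/eigE; exists Y | apply/purely_imag_permute].
Qed.

Lemma delta_permute (s t : 'S_N) i j :
  delta_mx i j = permute s t (delta_mx (s i) (t j)) :> M.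
Proof. by apply/matrixP=> k l; rewrite !mxE mulr1 mul1r !(inj_eq perm_inj). Qed.

Lemma mult_I_monomial a b (s t : 'S_N) U lam :
  unit_phases a -> unit_phases b ->
  mult_I (monomial a b s t U) lam = mult_I U lam.
Proof.
move=> ua ub; rewrite /mult_I -(char_poly_perm (lin_mx (Iop U)) (vec_perm s t)).
congr (mup _ (char_poly _)); apply/matrixP=> p q.
case/mxvec_indexP: p => i j; case/mxvec_indexP: q => k l.
rewrite lin_mx_delta [RHS]mxE [RHS]mxE !permE !vec_perm_funE lin_mx_delta.
by rewrite (delta_permute s t i j) Iop_monomial // mxE mulr1 mul1r.
Qed.

Lemma real_linear_monomial a b s t : real_linear (monomial a b s t).
Proof. by split=> [X Y | r X]; rewrite (monomialD, monomialZ). Qed.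

End MonomialTransform.

Unset Implicit Arguments.
Set Strict Implicit.

Theorem corollary3p6 (R : rcfType) (N : nat) (U : 'M[complex R]_N)
  (dS dT : 'rV[complex R]_N) (pS pT : 'S_N) :
  unitary U -> no_zero_entries U ->
  unit_moduli dS -> unit_moduli dT ->
  let S := enphased dS pS in
  let T := enphased dT pT in
  let PiS := perm_mx pS in
  let PiT := perm_mx pT in
  let V := S *m U *m invmx T in
  (forall k : nat, real_dim (feasible U) k <-> real_dim (feasible V) k)
  /\ mult_I U 1 = mult_I V 1
  /\ (forall X, eigsp V 1 X <-> img (Phi PiS PiT) (eigsp U 1) X)
  /\ (forall X, Im_eigsp V 1 X <-> img (Phi PiS PiT) (Im_eigsp U 1) X)
  /\ (forall X, feasible V X <-> img (Phi S T) (feasible U) X).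
Proof.
(* Unitarity of U and its nonvanishing entries are not needed: the identities
   hold for every U, with C_W^-1 read as its defining formula Cinv. *)
move=> _ _ udS udT S T PiS PiT V.
pose d i := dT 0 i; pose a i := dS 0 i; pose b i := (d i)^*.
have ua : unit_phases a by move=> i; rewrite -normCK udS expr1n.
have ud : unit_phases d by move=> i; rewrite -normCK udT expr1n.
have ub : unit_phases b := unit_phasesJ ud.
have PhiST : Phi S T =1 monomial a b pS pT.
  by move=> Y; rewrite /S /T !enphased_monomial Phi_monomial.
have PhiPi : Phi PiS PiT =1 monomial (fun _ => 1) (fun _ => 1) pS pT.
  move=> Y; rewrite /PiS /PiT !perm_mx_monomial Phi_monomial; last exact: unit_phases1.
  by apply: eq_monomial => // i; rewrite conjC1.
have VE : V = monomial a b pS pT U by rewrite -PhiST.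
clearbody V; subst V.
have feasE X := feasible_monomialE pS pT U X ua ub.
split; [|split; [|split; [|split]]].
- move=> k; rewrite (real_dim_ext k feasE) real_dim_imgE //.
  + exact: real_linear_monomial.
  + exact: bij_monomial.
- by rewrite mult_I_monomial.
- move=> X; rewrite (eigsp_monomialE _ _ _ _ _ ua ub).
  by apply: eq_img => Y; rewrite PhiPi.
- move=> X; rewrite (Im_eigsp_monomialE _ _ _ _ _ ua ub).
  by apply: eq_img => Y; rewrite PhiPi.
- by move=> X; rewrite feasE; apply: eq_img => Y; rewrite PhiST.
Qed.
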